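(* Let $\Gamma=\mathbb{Z}^\ell$, let $\sigma:\Gamma\to\Gamma$ be a group homomorphism, let $\mathcal{A}$ be a finite list of elements of $\Gamma$ and $\sigma(\mathcal{A})$ the list of images, and let $G=(S^1)^p\times\mathbb{R}^q$ with $p>0$. Then $$\chi^G_{\sigma(\mathcal{A})}(0)=|\det(\sigma)|^p\cdot\chi^G_{\mathcal{A}}(0).$$
   Context: For a sublist $\mathcal{S}$ (sublists distinguished by index) of a finite list in a finitely generated abelian group $\Gamma$: $r_{\mathcal{S}}$ is the rank of $\langle\mathcal{S}\rangle$, $m(\mathcal{S};G)=\#\mathrm{Hom}((\Gamma/\langle\mathcal{S}\rangle)_{\mathrm{tor}},G)$, and the $G$-characteristic polynomial is $\chi^G_{\mathcal{A}}(t)=\sum_{\mathcal{S}\subset\mathcal{A}}(-1)^{\#\mathcal{S}}m(\mathcal{S};G)\,t^{r_\Gamma-r_{\mathcal{S}}}$, where $r_\Gamma$ is the rank of $\Gamma$. *)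

From Stdlib Require Import Reals ClassicalEpsilon.
From HB Require Import structures.
From mathcomp Require Import all_boot all_order all_algebra.
Set Implicit Arguments. Unset Strict Implicit. Unset Printing Implicit Defensive.
Import Order.TTheory GRing.Theory Num.Theory.
Local Open Scope ring_scope.

(* Gamma = Z^l is modelled as integer row vectors 'rV[int]_l. *)
Notation Gam l := 'rV[int]_l.

(* An element: p points of R^2 (meant to lie on the unit circle, complex
   multiplication) and q reals (addition). *)
Record Gel (p q : nat) := mkGel { circ : 'I_p -> (R * R)%type ; lin : 'I_q -> R }.

Definition cmul (z w : R * R) : R * R :=
  (Rminus (Rmult z.1 w.1) (Rmult z.2 w.2), Rplus (Rmult z.1 w.2) (Rmult z.2 w.1)).

Definition gmul p q (g h : Gel p q) : Gel p q :=
  mkGel (fun i => cmul (circ g i) (circ h i)) (fun j => Rplus (lin g j) (lin h j)).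

Definition gone p q : Gel p q := mkGel (fun _ : 'I_p => (R1, R0)) (fun _ : 'I_q => R0).

Definition inG p q (g : Gel p q) : Prop :=
  forall i, Rplus (Rmult (circ g i).1 (circ g i).1) (Rmult (circ g i).2 (circ g i).2) = R1.

Definition geq p q (g h : Gel p q) : Prop :=
  (forall i, circ g i = circ h i) /\ (forall j, lin g j = lin h j).

(* A sublist of A is a set of indices of A. <S> = Z-span. *)
Definition inSpan l (A : seq (Gam l)) (S : {set 'I_(size A)}) (v : Gam l) : Prop :=
  exists c : 'I_(size A) -> int, v = \sum_(i in S) c i *: A`_i.

(* preimage in Gamma of (Gamma/<S>)_tor *)
Definition inTor l (A : seq (Gam l)) (S : {set 'I_(size A)}) (v : Gam l) : Prop :=
  exists n : nat, (0 < n)%N /\ inSpan S (v *+ n).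

(* Homomorphisms (Gamma/<S>)_tor -> G, represented as maps on the torsion
   preimage that are additive there and trivial on <S>. *)
Definition isHomTor l p q (A : seq (Gam l)) (S : {set 'I_(size A)})
    (f : Gam l -> Gel p q) : Prop :=
  (forall x, inTor S x -> inG (f x)) /\
  (forall x y, inTor S x -> inTor S y -> geq (f (x + y)) (gmul (f x) (f y))) /\
  (forall s, inSpan S s -> geq (f s) (gone p q)).

(* two such maps induce the same homomorphism on the quotient *)
Definition homEq l p q (A : seq (Gam l)) (S : {set 'I_(size A)})
    (f g : Gam l -> Gel p q) : Prop :=
  forall x, inTor S x -> geq (f x) (g x).

Definition homCount l p q (A : seq (Gam l)) (S : {set 'I_(size A)}) (N : nat) : Prop :=
  exists hs : seq (Gam l -> Gel p q),
    size hs = N /\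
    (forall i, (i < N)%N -> isHomTor S (nth (fun _ => gone p q) hs i)) /\
    (forall i j, (i < N)%N -> (j < N)%N -> i <> j ->
        ~ homEq S (nth (fun _ => gone p q) hs i) (nth (fun _ => gone p q) hs j)) /\
    (forall f, isHomTor S f ->
        exists2 i, (i < N)%N & homEq S f (nth (fun _ => gone p q) hs i)).

Definition mult l p q (A : seq (Gam l)) (S : {set 'I_(size A)}) : nat :=
  epsilon (inhabits 0%N) (fun N => homCount p q S N).

Definition rk l (A : seq (Gam l)) (S : {set 'I_(size A)}) : nat :=
  \rank (\matrix_(i < size A) (if i \in S then map_mx (intr : int -> rat) A`_i else 0)).

Definition chiG l p q (A : seq (Gam l)) : {poly int} :=
  \sum_(S : {set 'I_(size A)})
     (((-1) ^+ #|S| * (mult p q S)%:R) *: 'X^(l - rk S)).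

(* sigma : Gamma -> Gamma given by an integer matrix acting on row vectors *)
Definition applyHom l (M : 'M[int]_l) (v : Gam l) : Gam l := v *m M.

(* At t = 0 only the sublists S of full rank survive, each contributing
   (-1)^#S m(S;G).  For such S, a Smith normal form turns <S> into the lattice
   spanned by the rows of diag(e) R with R unimodular, so Gamma/<S> is the
   finite group Z/e_1 x ... x Z/e_l of order |det X| for any basis X of <S>.
   Its homomorphisms to G = (S^1)^p x R^q vanish on R^q and send the i-th basis
   row to an |e_i|-th root of unity in each circle, so m(S;G) = |det X|^p.
   The image sublist sigma(S) has basis X M, hence contributes
   |det X|^p |det M|^p; both sides vanish together when the rank drops. *)

From Pilot Require Import Defs.
From Stdlib Require Import Reals ClassicalEpsilon FunctionalExtensionality PropExtensionality.
From HB Require Import structures.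
From mathcomp Require Import all_boot all_order all_algebra.
From mathcomp Require Import Rstruct ring lra.
Set Implicit Arguments. Unset Strict Implicit. Unset Printing Implicit Defensive.
Import Order.TTheory GRing.Theory Num.Theory.
Local Open Scope ring_scope.

(* Rstruct makes Stdlib's R a realType; rebinding its scope lets real arguments
   be written with MathComp's ring operations. *)
Bind Scope ring_scope with R.

(** * Points of the unit circle *)

Definition cis (t : R) : R * R := (cos t, sin t).

Lemma cisD a b : cis (a + b) = cmul (cis a) (cis b).
Proof. by rewrite /cis /cmul /= cosD sinD RplusE RminusE !RmultE; congr pair; ring. Qed.

Lemma cmulz1 (z : R * R) : cmul z (1, 0) = z.
Proof. by case: z => x y; rewrite /cmul /= !RplusE !RminusE !RmultE; congr pair; ring. Qed.

Lemma cis_norm t : (cis t).1 * (cis t).1 + (cis t).2 * (cis t).2 = 1.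
Proof. by rewrite /= addrC; have := sin2_cos2 t. Qed.

Lemma IZR_intr (k : Z) : exists z : int, IZR k = z%:~R.
Proof.
case: k => [|r|r]; first by exists 0.
  by exists (Posz (nat_of_pos r)); rewrite IZRposE INRE.
by exists (- Posz (nat_of_pos r)); rewrite /IZR -/(IZR (Z.pos r)) IZRposE INRE RoppE mulrNz.
Qed.

Lemma IZR2 : IZR 2 = 2%:R. Proof. by []. Qed.

Definition tau : R := 2 * PI.

Lemma cis_tau_int (k : int) : cis (tau * k%:~R) = (1, 0).
Proof.
suff cis_tau_nat (n : nat) : cis (tau * n%:R) = (1, 0).
  case: k => n; first exact: cis_tau_nat.
  have := cis_tau_nat n.+1; rewrite NegzE mulrNz mulrN /cis.
  by rewrite -RoppE cos_neg sin_neg => -[-> ->]; rewrite RoppE oppr0.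
have := cos_period 0 n; have := sin_period 0 n.
rewrite cos_0 sin_0 /cis INRE RplusE !RmultE add0r IZR2 => s0 c0.
have -> : tau * n%:R = 2%:R * n%:R * PI by rewrite /tau; ring.
by rewrite c0 s0.
Qed.

Lemma cos_eq1 t : cos t = 1 -> exists k : int, t = tau * k%:~R.
Proof.
move=> ct1.
have t_half : 2 * (t / 2) = t :> R by rewrite mulrC divfK // pnatr_eq0.
have sin_half0 : sin (t / 2) = 0.
  have := cos_2a_sin (t / 2); rewrite !RmultE RminusE R1E IZR2 t_half ct1 => h.
  have : sin (t / 2) * sin (t / 2) = 0 by lra.
  by move/eqP; rewrite mulf_eq0 orbb => /eqP.
have [k half_eq] := sin_eq_0_0 _ sin_half0.
have [z IZRk] := IZR_intr k.
exists z; rewrite -t_half half_eq RmultE IZRk /tau; ring.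
Qed.

Lemma cis_onto (z : R * R) : z.1 * z.1 + z.2 * z.2 = 1 -> exists t, z = cis t.
Proof.
case: z => x y /= norm1.
have x_range : Rle (-1) x /\ Rle x 1.
  have m1 : IZR (-1) = -1 by [].
  by split; apply/RleP; rewrite ?m1 ?R1E; nra.
have sin_acos_abs : sin (acos x) = `|y|.
  rewrite sin_acos // RsqrtE RminusE R1E /Rsqr RmultE.
  by rewrite (_ : 1 - x * x = y ^+ 2) ?sqrtr_sqr // expr2; lra.
have [y_ge0 | y_lt0] := lerP 0 y.
  by exists (acos x); rewrite /cis cos_acos // sin_acos_abs ger0_norm.
exists (- acos x); rewrite /cis -RoppE cos_neg sin_neg cos_acos // sin_acos_abs.
by rewrite RoppE ltr0_norm ?opprK.
Qed.

Definition cpow (z : R * R) (n : nat) : R * R := iter n (cmul z) (1, 0).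

Lemma cpow_cis t n : cpow (cis t) n = cis (t *+ n).
Proof.
elim: n => [|n IHn]; first by rewrite /cis mulr0n cos_0 sin_0.
by rewrite /cpow iterS -/(cpow _ _) IHn -cisD mulrS.
Qed.

Definition cis_frac (D : nat) (n : int) : R * R := cis (tau * n%:~R / D%:R).

Lemma cis_fracD D a b : cis_frac D (a + b) = cmul (cis_frac D a) (cis_frac D b).
Proof. by rewrite /cis_frac -cisD intrD mulrDr mulrDl. Qed.

Lemma cis_frac_mul D t : (0 < D)%N -> cis_frac D (D%:Z * t) = (1, 0).
Proof.
move=> D_gt0; rewrite /cis_frac intrM -pmulrn mulrCA mulrAC divff ?mul1r ?pnatr_eq0 -?lt0n //.
exact: cis_tau_int.
Qed.

Lemma tau_neq0 : tau != 0.
Proof. by rewrite /tau mulf_neq0 ?pnatr_eq0 //; apply/lt0r_neq0/RltP/PI_RGT_0. Qed.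

Lemma cis_frac_inj D a b : (0 < D)%N -> cis_frac D a = cis_frac D b -> (D%:Z %| a - b)%Z.
Proof.
move=> D_gt0 [cos_eq sin_eq].
have [k diff_eq] : exists k : int, tau * a%:~R / D%:R - tau * b%:~R / D%:R = tau * k%:~R.
  apply: cos_eq1; rewrite -RminusE cos_minus cos_eq sin_eq !RmultE.
  by have := sin2_cos2 (tau * b%:~R / D%:R); rewrite /Rsqr !RmultE RplusE R1E addrC.
apply/dvdzP; exists k; apply/(@intr_inj R); rewrite mulrC intrM.
apply: (mulfI tau_neq0); rewrite -pmulrn mulrCA -diff_eq intrB.
by field; rewrite pnatr_eq0 -lt0n.
Qed.

Lemma cis_frac_root D d z : (0 < d)%N -> (d %| D)%N -> (0 < D)%N ->
  z.1 * z.1 + z.2 * z.2 = 1 -> cpow z d = (1, 0) ->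
  exists s : int, z = cis_frac D (s * (D %/ d)%N%:Z).
Proof.
move=> d_gt0 dvd_dD D_gt0 /cis_onto[t ->]; rewrite cpow_cis => -[/cos_eq1[s td_eq] _].
exists s; rewrite /cis_frac; congr cis.
have D_eq : D = (D %/ d * d)%N by rewrite divnK.
have m_gt0 : (0 < D %/ d)%N by rewrite divn_gt0 // dvdn_leq.
rewrite {2}D_eq natrM intrM -pmulrn mulrA -td_eq -mulr_natr.
by field; rewrite !pnatr_eq0 -!lt0n d_gt0 m_gt0.
Qed.

Section CharacterGroup.
Variables p q : nat.

Lemma geq_eq (g h : Gel p q) : Defs.geq g h -> g = h.
Proof.
case: g h => [c1 l1] [c2 l2] [/= circE linE].
by congr mkGel; apply: functional_extensionality.
Qed.

Lemma gmulA : associative (@gmul p q).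
Proof.
move=> g h k; congr mkGel; apply: functional_extensionality => i /=; last exact: addrA.
by rewrite /cmul /= !RplusE !RminusE !RmultE; congr pair; ring.
Qed.

Lemma gmulC : commutative (@gmul p q).
Proof.
move=> g h; congr mkGel; apply: functional_extensionality => i /=; last exact: addrC.
by rewrite /cmul /= !RplusE !RminusE !RmultE; congr pair; ring.
Qed.

Lemma gmulg1 : right_id (gone p q) (@gmul p q).
Proof.
case=> c l; congr mkGel; apply: functional_extensionality => i /=; last exact: addr0.
exact: cmulz1.
Qed.

Definition gpow (g : Gel p q) (n : nat) : Gel p q := iter n (gmul g) (gone p q).

Lemma circ_gpow (g : Gel p q) n k : circ (gpow g n) k = cpow (circ g k) n.
Proof. by elim: n => [|n IHn] //=; rewrite IHn. Qed.

Lemma lin_gpow (g : Gel p q) n j : lin (gpow g n) j = lin g j *+ n.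
Proof. by elim: n => [|n IHn] //=; rewrite IHn mulrS. Qed.

Lemma gmul_inv_uniq (g h k : Gel p q) :
  gmul g k = gone p q -> gmul h k = gone p q -> g = h.
Proof.
by move=> gk hk; rewrite -[g]gmulg1 -hk [gmul h k]gmulC gmulA gk gmulC gmulg1.
Qed.

End CharacterGroup.

Lemma additive_eq_on_rows l p q (R : 'M[int]_l) (f g : Gam l -> Gel p q) :
  R \in unitmx -> f 0 = gone p q -> g 0 = gone p q ->
  {morph f : x y / x + y >-> gmul x y} -> {morph g : x y / x + y >-> gmul x y} ->
  (forall i, f (row i R) = g (row i R)) -> f =1 g.
Proof.
move=> R_unit f0 g0 fD gD fg_rows v.
pose P v := f v = g v.
have PN x : P x -> P (- x).
  move=> fgx; apply: (@gmul_inv_uniq _ _ _ _ (f x)); first by rewrite -fD addNr.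
  by rewrite fgx -gD addNr.
have PZ x (c : int) : P x -> P (c *: x).
  move=> Px; have Pn n : P (x *+ n).
    by elim: n => [|n IHn]; rewrite ?mulr0n /P ?f0 ?g0 // mulrS fD gD Px IHn.
  by case: c => n; rewrite ?NegzE ?scaleNr -natz scaler_nat //; apply/PN/Pn.
rewrite -(mulmxKV R_unit v) mulmx_sum_row.
apply: (big_ind P) => [|x y Px Py|i _]; first by rewrite /P f0 g0.
  by rewrite /P fD gD Px Py.
exact: PZ.
Qed.

(** * Counting characters modulo a subgroup *)

(* inTor, isHomTor, homEq and homCount of Defs with <S> replaced by an
   arbitrary predicate L: homCount p q S is char_count p q (inSpan S). *)
Section CharacterCount.
Variables l p q : nat.
Implicit Types (L : Gam l -> Prop) (f g : Gam l -> Gel p q).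

Definition torsion_mod L v := exists n : nat, (0 < n)%N /\ L (v *+ n).

Definition is_char L f : Prop :=
  (forall x, torsion_mod L x -> inG (f x)) /\
  (forall x y, torsion_mod L x -> torsion_mod L y -> Defs.geq (f (x + y)) (gmul (f x) (f y))) /\
  (forall s, L s -> Defs.geq (f s) (gone p q)).

Definition char_eq L f g : Prop := forall x, torsion_mod L x -> Defs.geq (f x) (g x).

Definition char_count L (N : nat) : Prop :=
  exists hs : seq (Gam l -> Gel p q),
    size hs = N /\
    (forall i, (i < N)%N -> is_char L (nth (fun _ => gone p q) hs i)) /\
    (forall i j, (i < N)%N -> (j < N)%N -> i <> j ->
        ~ char_eq L (nth (fun _ => gone p q) hs i) (nth (fun _ => gone p q) hs j)) /\
    (forall f, is_char L f ->
        exists2 i, (i < N)%N & char_eq L f (nth (fun _ => gone p q) hs i)).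

Lemma char_eq_sym L f g : char_eq L f g -> char_eq L g f.
Proof. by move=> fg x /fg/geq_eq->. Qed.

Lemma char_eq_trans L f g h : char_eq L f g -> char_eq L g h -> char_eq L f h.
Proof. by move=> fg gh x tx; rewrite (geq_eq (fg x tx)); exact: gh. Qed.

Lemma char_count_le L N1 N2 : char_count L N1 -> char_count L N2 -> (N1 <= N2)%N.
Proof.
move=> [hs1 [_ [char1 [neq1 _]]]] [hs2 [_ [_ [_ cover2]]]].
have cover12 (i : 'I_N1) : exists j : 'I_N2,
    char_eq L (nth (fun _ => gone p q) hs1 i) (nth (fun _ => gone p q) hs2 j).
  by have [j j_lt ij] := cover2 _ (char1 _ (ltn_ord i)); exists (Ordinal j_lt).
have [F hF] := fin_all_exists cover12.
rewrite -(card_ord N1) -(card_ord N2); apply: (@leq_card _ _ F) => i i' Fii'.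
apply/val_inj/eqP/negPn/negP => /eqP ii'; apply: (neq1 _ _ (ltn_ord i) (ltn_ord i') ii').
by apply: char_eq_trans (hF i) _; rewrite Fii'; exact: char_eq_sym.
Qed.

Lemma char_count_uniq L N1 N2 : char_count L N1 -> char_count L N2 -> N1 = N2.
Proof. by move=> c1 c2; apply/eqP; rewrite eqn_leq !(char_count_le c1, char_count_le c2). Qed.

Lemma char_count_ext L1 L2 N : (forall v, L1 v <-> L2 v) -> char_count L1 N -> char_count L2 N.
Proof.
move=> L12; suff -> : L1 = L2 by [].
by apply: functional_extensionality => v; apply: propositional_extensionality.
Qed.

Lemma char_count_card L (T : finType) (phi : T -> Gam l -> Gel p q) :
  (forall x, is_char L (phi x)) -> (forall x y, char_eq L (phi x) (phi y) -> x = y) ->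
  (forall f, is_char L f -> exists x, char_eq L f (phi x)) ->
  char_count L #|T|.
Proof.
move=> phi_char phi_inj phi_onto.
have size_enum : size (enum T) = #|T| by rewrite cardE.
have nth_phi i x0 : (i < #|T|)%N ->
    nth (fun _ => gone p q) (map phi (enum T)) i = phi (nth x0 (enum T) i).
  by move=> i_lt; rewrite (nth_map x0) // size_enum.
exists (map phi (enum T)); split; first by rewrite size_map.
split; first by move=> i i_lt; rewrite (nth_phi i (enum_val (Ordinal i_lt))).
split.
  move=> i j i_lt j_lt ij; set x0 := enum_val (Ordinal i_lt).
  rewrite (nth_phi i x0) // (nth_phi j x0) // => /phi_inj eq_ij; apply: ij.
  by apply/eqP; rewrite -(nth_uniq x0 _ _ (enum_uniq T)) ?size_enum // eq_ij.
move=> f /phi_onto[x fx]; have x_lt : (index x (enum T) < #|T|)%N.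
  by rewrite -size_enum index_mem mem_enum.
by exists (index x (enum T)); rewrite // (nth_phi _ x) // nth_index ?mem_enum.
Qed.

End CharacterCount.

Lemma mult_char_count l p q (A : seq (Gam l)) (S : {set 'I_(size A)}) N :
  char_count p q (inSpan S) N -> Defs.mult p q S = N.
Proof.
move=> cN; have cmult := epsilon_spec (inhabits 0%N) (fun N => homCount p q S N) (ex_intro _ N cN).
exact: char_count_uniq cmult cN.
Qed.

(** * Integer row spans *)

Definition in_zspan m l (K : 'M[int]_(m, l)) (v : Gam l) : Prop :=
  exists u : 'rV_m, v = u *m K.

Lemma zspan_sub_mulmx m n l (X : 'M[int]_(m, l)) (Y : 'M[int]_(n, l)) :
  (forall v, in_zspan X v -> in_zspan Y v) -> exists U, X = U *m Y.
Proof.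
move=> XY; have row_in_Y i : exists u : 'rV_n, row i X = u *m Y.
  by apply: XY; exists (delta_mx 0 i); rewrite rowE.
have [U hU] := fin_all_exists row_in_Y.
by exists (\matrix_i U i); apply/row_matrixP => i; rewrite row_mul rowK hU.
Qed.

Lemma zspan_eq_of_factors m n l (X : 'M[int]_(m, l)) (Y : 'M[int]_(n, l)) U V :
  X = U *m Y -> Y = V *m X -> forall v, in_zspan X v <-> in_zspan Y v.
Proof.
move=> XUY YVX v; split=> -[u ->]; first by exists (u *m U); rewrite XUY mulmxA.
by exists (u *m V); rewrite YVX mulmxA.
Qed.

Lemma zspan_eq_rank m n l (X : 'M[int]_(m, l)) (Y : 'M[int]_(n, l)) :
  (forall v, in_zspan X v <-> in_zspan Y v) ->
  \rank (map_mx intr X : 'M[rat]_(m, l)) = \rank (map_mx intr Y : 'M[rat]_(n, l)).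
Proof.
move=> XY; have [U XUY] := zspan_sub_mulmx (fun v => proj1 (XY v)).
have [V YVX] := zspan_sub_mulmx (fun v => proj2 (XY v)).
apply/eqP; rewrite eqn_leq; apply/andP; split.
  by rewrite [in X in (X <= _)%N]XUY map_mxM mxrankM_maxr.
by rewrite [in X in (X <= _)%N]YVX map_mxM mxrankM_maxr.
Qed.

Lemma zspan_eq_det l (X Y : 'M[int]_l) :
  (forall v, in_zspan X v <-> in_zspan Y v) -> `|\det X|%N = `|\det Y|%N.
Proof.
move=> XY; have [U XUY] := zspan_sub_mulmx (fun v => proj1 (XY v)).
have [V YVX] := zspan_sub_mulmx (fun v => proj2 (XY v)).
have [X0|Xn0] := eqVneq (\det X) 0; first by rewrite YVX det_mulmx X0 mulr0.
have UV1 : \det U * \det V = 1.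
  by apply: (mulIf Xn0); rewrite mul1r -mulrA -!det_mulmx -YVX -XUY.
have /eqP : (`|\det U| * `|\det V| = 1)%N by rewrite -abszM UV1.
by rewrite muln_eq1 => /andP[/eqP U1 _]; rewrite XUY det_mulmx abszM U1 mul1n.
Qed.

Lemma zspan_smith m l (K : 'M[int]_(m, l)) : exists (e : 'rV[int]_l) (R : 'M[int]_l),
  R \in unitmx /\ forall v, in_zspan K v <-> in_zspan (diag_mx e *m R) v.
Proof.
have [L L_unit [R R_unit [d _ K_eq]]] := int_Smith_normal_form K.
pose e : 'rV[int]_l := \row_j (if (j < m)%N then d`_j else 0).
have diag_eq : \matrix_(i < m, j < l) (d`_i *+ (i == j :> nat)) = pid_mx m *m diag_mx e.
  apply/matrixP => i j; rewrite mul_mx_diag !mxE ltn_ord andbT.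
  have [ij|_] := eqVneq (i : nat) j; last by rewrite mul0r.
  by rewrite mul1r -ij ltn_ord.
exists e, R; split=> //.
apply: (zspan_eq_of_factors (U := L *m pid_mx m) (V := pid_mx m *m invmx L)).
  by rewrite K_eq diag_eq !mulmxA.
rewrite K_eq diag_eq !mulmxA mulmxKV // pid_mx_id //; congr (_ *m _).
apply/matrixP => i j; rewrite mul_mx_diag !mxE val_eqE.
have [<-|_] := eqVneq i j; last by rewrite mul0r.
by case: ltnP; rewrite ?mul1r ?mul0r.
Qed.

(** * The lattice spanned by the rows of diag(e) R *)

Lemma eq_of_dvdz_sub (d a b : nat) :
  (a < d)%N -> (b < d)%N -> (d%:Z %| a%:Z - b%:Z)%Z -> a = b.
Proof. by move=> ad bd; rewrite -eqz_mod_dvd !modz_nat !modn_small // => /eqP[]. Qed.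

Section DiagonalLattice.
Variables l p q : nat.
Variables (e : 'rV[int]_l) (R : 'M[int]_l).
Hypotheses (e_neq0 : forall j, e ord0 j != 0) (R_unit : R \in unitmx).

Local Notation lattice := (in_zspan (diag_mx e *m R)).

Lemma in_latticeP v : lattice v <-> forall j, (e ord0 j %| (v *m invmx R) ord0 j)%Z.
Proof.
split=> [[u ->] j|e_dvd].
  by rewrite mulmxA mulmxK // mul_mx_diag mxE dvdz_mull.
exists (\row_j ((v *m invmx R) ord0 j %/ e ord0 j)%Z).
rewrite mulmxA mul_mx_diag; symmetry; apply: (canLR (mulmxKV R_unit)).
by apply/matrixP => i j; rewrite [LHS]mxE [X in X * _]mxE (ord1 i) divzK.
Qed.

Definition covol : nat := \prod_(i < l) `|e ord0 i|%N.

Lemma covol_gt0 : (0 < covol)%N.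
Proof. by rewrite prodn_gt0 // => i; rewrite absz_gt0. Qed.

Lemma dvd_e_covol i : (`|e ord0 i| %| covol)%N.
Proof. by rewrite /covol (bigD1 i) //= dvdn_mulr. Qed.

Lemma covol_det : `|\det (diag_mx e *m R)|%N = covol.
Proof.
have det_R1 : `|\det R|%N = 1%N.
  by move: R_unit; rewrite unitmxE unitrE; case: (\det R) => [[|[|n]]|[|n]].
rewrite det_mulmx det_diag abszM det_R1 muln1.
by rewrite (big_morph absz abszM (erefl : `|1|%N = 1%N)).
Qed.

Definition cofactor i : nat := (covol %/ `|e ord0 i|)%N.

Lemma covol_cofactor i : covol = (`|e ord0 i| * cofactor i)%N.
Proof. by rewrite mulnC divnK ?dvd_e_covol. Qed.

Lemma cofactor_gt0 i : (0 < cofactor i)%N.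
Proof. by move: covol_gt0; rewrite (covol_cofactor i) muln_gt0 => /andP[]. Qed.

Lemma torsion_lattice v : torsion_mod lattice v.
Proof.
exists covol; split; first exact: covol_gt0.
apply/in_latticeP => j; rewrite -scaler_nat -scalemxAl mxE.
by apply: dvdz_mulr; rewrite dvdzE natz absz_nat dvd_e_covol.
Qed.

Lemma row_mulrn_lattice i : lattice (row i R *+ `|e ord0 i|).
Proof.
apply/in_latticeP => j; rewrite -scaler_nat -scalemxAl rowE mulmxK // !mxE.
have [->|_] := eqVneq j i; last by rewrite andbF mulr0 dvdz0.
by rewrite andbT eqxx mulr1 dvdzE natz absz_nat.
Qed.

Section LatticeCharacter.
Variable f : Gam l -> Gel p q.
Hypothesis f_char : is_char lattice f.

Lemma charD : {morph f : x y / x + y >-> gmul x y}.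
Proof. by case: f_char => _ [fD _] x y; apply/geq_eq/fD; exact: torsion_lattice. Qed.

Lemma char_lattice s : lattice s -> f s = gone p q.
Proof. by case: f_char => _ [_ f1] /f1/geq_eq. Qed.

Lemma char0 : f 0 = gone p q.
Proof. by apply: char_lattice; exists 0; rewrite mul0mx. Qed.

Lemma char_inG x : inG (f x).
Proof. by case: f_char => fG _; apply/fG/torsion_lattice. Qed.

Lemma char_mulrn v n : f (v *+ n) = gpow (f v) n.
Proof. by elim: n => [|n IHn]; rewrite ?mulr0n ?char0 // mulrS charD IHn. Qed.

Lemma char_lin_row i j : lin (f (row i R)) j = 0.
Proof.
have := congr1 (fun g => lin g j) (char_lattice (row_mulrn_lattice i)).
rewrite char_mulrn lin_gpow /= => /eqP; rewrite mulrn_eq0 absz_eq0 (negbTE (e_neq0 i)).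
by move/eqP.
Qed.

Lemma char_circ_row k i : exists u : 'I_`|e ord0 i|,
  circ (f (row i R)) k = cis_frac covol (u%:Z * (cofactor i)%:Z).
Proof.
set E := `|e ord0 i|%N; have E_gt0 : (0 < E)%N by rewrite absz_gt0.
have E_root : cpow (circ (f (row i R)) k) E = (1, 0).
  by rewrite -circ_gpow -char_mulrn (char_lattice (row_mulrn_lattice i)).
have [s ->] := cis_frac_root E_gt0 (dvd_e_covol i) covol_gt0 (char_inG _ k) E_root.
have r_lt : (`|(s %% E%:Z)%Z| < E)%N.
  by rewrite -ltz_nat gez0_abs ?modz_ge0 ?ltz_pmod // -?lt0n.
exists (Ordinal r_lt); rewrite /= gez0_abs ?modz_ge0 -?lt0n //.
rewrite {1}(divz_eq s E%:Z) addrC mulrDl cis_fracD -mulrA -PoszM -covol_cofactor.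
by rewrite [_ * covol%:Z]mulrC cis_frac_mul ?covol_gt0 // cmulz1.
Qed.

End LatticeCharacter.

(* A character sends the i-th row of R to an |e_i|-th root of unity in each
   circle; writing all these roots over the common denominator covol makes
   char_of additive. *)
Definition char_param := {ffun 'I_p -> {dffun forall i : 'I_l, 'I_`|e ord0 i|}}.

Lemma card_char_param : #|char_param| = (covol ^ p)%N.
Proof.
rewrite card_ffun card_ord card_dep_ffun foldrE big_map big_enum /=.
by congr (_ ^ _)%N; apply: eq_bigr => i _; rewrite card_ord.
Qed.

Definition angle (x : char_param) (k : 'I_p) (v : Gam l) : int :=
  \sum_(i < l) (v *m invmx R) ord0 i * (x k i)%:Z * (cofactor i)%:Z.

Definition char_of (x : char_param) (v : Gam l) : Gel p q :=
  mkGel (fun k => cis_frac covol (angle x k v)) (fun _ => 0).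

Lemma angleD x k v w : angle x k (v + w) = angle x k v + angle x k w.
Proof. by rewrite /angle -big_split; apply: eq_bigr => i _; rewrite mulmxDl mxE !mulrDl. Qed.

Lemma angle_lattice x k v : lattice v -> (covol%:Z %| angle x k v)%Z.
Proof.
move=> /in_latticeP e_dvd; apply: rpred_sum => i _.
rewrite (covol_cofactor i) PoszM dvdz_mul2r -?lt0n ?cofactor_gt0 //.
by apply: dvdz_mulr; rewrite dvdzE absz_nat -dvdzE.
Qed.

Lemma angle_row x k i : angle x k (row i R) = (x k i)%:Z * (cofactor i)%:Z.
Proof.
rewrite /angle (bigD1 i) //= big1 ?addr0 => [|j ji]; rewrite rowE mulmxK // mxE.
  by rewrite !eqxx mul1r.
by rewrite (negbTE ji) andbF !mul0r.
Qed.

Lemma char_of_char x : is_char lattice (char_of x).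
Proof.
split; first by move=> v _ k; exact: cis_norm.
split=> [v w _ _|s s_lat]; split=> k //=.
- by rewrite angleD cis_fracD.
- by rewrite RplusE add0r.
- have /dvdzP[t ->] := angle_lattice x k s_lat.
  by rewrite mulrC cis_frac_mul ?covol_gt0.
Qed.

Lemma char_of_inj x y : char_eq lattice (char_of x) (char_of y) -> x = y.
Proof.
move=> xy; apply/ffunP => k; apply/ffunP => i; apply/val_inj.
have := congr1 (fun g => circ g k) (geq_eq (xy (row i R) (torsion_lattice _))).
rewrite /= !angle_row => /(cis_frac_inj covol_gt0).
rewrite (covol_cofactor i) PoszM -mulrBl dvdz_mul2r -?lt0n ?cofactor_gt0 //.
by apply: eq_of_dvdz_sub.
Qed.

Lemma char_of_onto f : is_char lattice f -> exists x, char_eq lattice f (char_of x).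
Proof.
move=> f_char.
have row_params k : exists u : {dffun forall i : 'I_l, 'I_`|e ord0 i|}, forall i,
    circ (f (row i R)) k = cis_frac covol ((u i)%:Z * (cofactor i)%:Z).
  have [u hu] := fin_all_exists (char_circ_row f_char k).
  by exists [ffun i => u i] => i; rewrite ffunE.
have [u hu] := fin_all_exists row_params.
exists [ffun k => u k] => v _.
suff -> : f v = char_of [ffun k => u k] v by split.
have x_char := char_of_char [ffun k => u k].
apply: (additive_eq_on_rows R_unit (char0 f_char) (char0 x_char)) => [||i].
- exact: charD f_char.
- exact: charD x_char.
- apply: geq_eq; split=> [k|j] /=; first by rewrite angle_row ffunE hu.
  by rewrite char_lin_row.
Qed.

Lemma char_count_lattice : char_count p q lattice (`|\det (diag_mx e *m R)| ^ p)%N.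
Proof.
rewrite covol_det -card_char_param.
exact: char_count_card char_of_char char_of_inj char_of_onto.
Qed.

End DiagonalLattice.

Lemma char_count_zspan l p q (X : 'M[int]_l) :
  \det X != 0 -> char_count p q (in_zspan X) (`|\det X| ^ p)%N.
Proof.
move=> X_ndeg; have [e [R [R_unit XeR]]] := zspan_smith X.
have det_eq := zspan_eq_det XeR.
have e_neq0 j : e ord0 j != 0.
  apply: contraNneq X_ndeg => ej0; rewrite -absz_eq0 det_eq.
  by rewrite det_mulmx det_diag (bigD1 j) //= ej0 !mul0r.
rewrite det_eq; apply: char_count_ext (char_count_lattice p q e_neq0 R_unit).
by move=> v; split=> /XeR.
Qed.

Lemma zspan_rank_full l (X : 'M[int]_l) :
  (\rank (map_mx intr X : 'M[rat]_l) == l) = (\det X != 0).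
Proof.
by rewrite -[_ == l]/(row_free _) row_free_unit unitmxE unitfE det_map_mx intr_eq0.
Qed.

Section Sublist.
Variables (l : nat) (A : seq (Gam l)).
Implicit Type S : {set 'I_(size A)}.

Definition sublist_mx S : 'M[int]_(size A, l) :=
  \matrix_(i < size A) (if i \in S then A`_i else 0).

Lemma inSpan_sublist_mx S v : inSpan S v <-> in_zspan (sublist_mx S) v.
Proof.
have sum_rows (c : 'I_(size A) -> int) :
    \sum_(i in S) c i *: A`_i = \sum_i c i *: row i (sublist_mx S).
  rewrite big_mkcond; apply: eq_bigr => i _.
  by rewrite rowK; case: (i \in S); rewrite ?scaler0.
split=> [[c ->]|[u ->]]; last by exists (fun i => u 0 i); rewrite mulmx_sum_row sum_rows.
by exists (\row_i c i); rewrite mulmx_sum_row sum_rows; apply: eq_bigr => i _; rewrite mxE.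
Qed.

Lemma rk_sublist_mx S : rk S = \rank (map_mx intr (sublist_mx S) : 'M[rat]_(size A, l)).
Proof.
rewrite /rk; congr (\rank _); apply/matrixP => i j.
by rewrite !mxE; case: (i \in S); rewrite ?mxE.
Qed.

Lemma chiG_term_horner0 p q S (X : 'M[int]_l) : (0 < p)%N ->
  (forall v, inSpan S v <-> in_zspan X v) ->
  (((-1) ^+ #|S| * (mult p q S)%:R) *: 'X^(l - rk S)).[0] = (-1) ^+ #|S| * `|\det X| ^+ p.
Proof.
move=> p_gt0 SX; rewrite hornerZ hornerXn expr0n -mulrA; congr (_ * _).
have rk_eq : rk S = \rank (map_mx intr X : 'M[rat]_l).
  by rewrite rk_sublist_mx; apply: zspan_eq_rank => v; rewrite -inSpan_sublist_mx.
have [X_deg|X_ndeg] := eqVneq (\det X) 0.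
  have rk_lt : (rk S < l)%N.
    by rewrite ltn_neqAle rk_eq zspan_rank_full X_deg eqxx rank_leq_col.
  by rewrite subn_eq0 leqNgt rk_lt mulr0 X_deg normr0 expr0n eqn0Ngt p_gt0.
move: (X_ndeg); rewrite -zspan_rank_full -rk_eq => /eqP->; rewrite subnn mulr1.
have count := char_count_ext (fun v => iff_sym (SX v)) (char_count_zspan p q X_ndeg).
by rewrite (mult_char_count count) natrX natz abszE.
Qed.

End Sublist.

Lemma inSpan_square_basis l (A : seq (Gam l)) (S : {set 'I_(size A)}) :
  exists X : 'M[int]_l, forall v, inSpan S v <-> in_zspan X v.
Proof.
have [e [R [_ SeR]]] := zspan_smith (sublist_mx S).
by exists (diag_mx e *m R) => v; rewrite inSpan_sublist_mx.
Qed.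

Lemma imset_cast_ord_bij m n (mn : m = n) :
  bijective (fun S : {set 'I_m} => [set cast_ord mn i | i in S]).
Proof.
exists (fun S : {set 'I_n} => [set cast_ord (esym mn) i | i in S]) => S;
  rewrite -imset_comp (eq_imset (g := id)) ?imset_id // => i /=.
  exact: cast_ordK.
exact: cast_ordKV.
Qed.

Lemma inSpan_map l (M : 'M[int]_l) (A : seq (Gam l)) (X : 'M[int]_l)
    (S' : {set 'I_(size (map (applyHom M) A))}) :
  (forall v, inSpan [set cast_ord (size_map (applyHom M) A) i | i in S'] v <-> in_zspan X v) ->
  forall v, inSpan S' v <-> in_zspan (X *m M) v.
Proof.
set cast := cast_ord (size_map (applyHom M) A) => SX v.
have sum_map (c : 'I_(size A) -> int) :
    (\sum_(i in [set cast i | i in S']) c i *: A`_i) *m M =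
    \sum_(i in S') c (cast i) *: (map (applyHom M) A)`_i.
  rewrite big_imset /=; last by move=> i j _ _; exact: cast_ord_inj.
  rewrite mulmx_suml; apply: eq_bigr => i _.
  by rewrite (nth_map 0) -?scalemxAl // (leq_trans (ltn_ord i)) ?size_map.
split=> [[c ->]|[u ->]].
  pose c' i := c (cast_ord (esym (size_map (applyHom M) A)) i).
  have -> : \sum_(i in S') c i *: (map (applyHom M) A)`_i =
      (\sum_(i in [set cast i | i in S']) c' i *: A`_i) *m M.
    by rewrite sum_map; apply: eq_bigr => i _; rewrite /c' cast_ordK.
  have /SX[u ->] :
      inSpan [set cast i | i in S'] (\sum_(i in [set cast i | i in S']) c' i *: A`_i).
    by exists c'.
  by exists u; rewrite mulmxA.
have [c uX] : inSpan [set cast i | i in S'] (u *m X) by apply/SX; exists u.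
by exists (c \o cast); rewrite mulmxA uX sum_map.
Qed.

Theorem mainTheorem7 (l p q : nat) (M : 'M[int]_l) (A : seq 'rV[int]_l)
  (hp : (0 < p)%N) :
  (chiG p q (map (applyHom M) A)).[0] = `|\det M| ^+ p * (chiG p q A).[0].
Proof.
set cast := cast_ord (size_map (applyHom M) A).
rewrite /chiG !horner_sum mulr_sumr.
rewrite [RHS](reindex _ (onW_bij _ (imset_cast_ord_bij (size_map (applyHom M) A)))) /=.
apply: eq_bigr => S' _.
have [X SX] := inSpan_square_basis [set cast i | i in S'].
rewrite (chiG_term_horner0 _ hp SX) (chiG_term_horner0 _ hp (inSpan_map SX)).
rewrite card_imset; last exact: cast_ord_inj.
by rewrite det_mulmx normrM exprMn mulrA [LHS]mulrC.
Qed.
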